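(* Let $k\ge 2$ and let $G$ be a $\Gamma_{\times k,t}$-external graph with $\delta(G)\ge k$. Then for every graph $H$ with $\delta(H)\ge k$, \[ \Gamma_{\times k,t}(G\,\Box\,H)\ge\Gamma_{\times k,t}(G)\cdot\Gamma_{\times k,t}(H). \]
   Context: A set $S\subseteq V(G)$ is a $k$-tuple total dominating set ($k$TDS) of a graph $G$ with $\delta(G)\ge k$ if $|N_G(x)\cap S|\ge k$ for every $x\in V(G)$. The upper $k$-tuple total domination number $\Gamma_{\times k,t}(G)$ is the maximum cardinality of a minimal (with respect to inclusion) $k$TDS of $G$; a minimal $k$TDS of this cardinality is a $\Gamma_{\times k,t}$-set. For $v\in S$, a vertex $v'$ is a $k$-open private neighbor of $v$ with respect to $S$ if $v\in N_G(v')$ and $|N_G(v')\cap S|=k$; it is external if $v'\notin S$. A graph $G$ is $\Gamma_{\times k,t}$-external if it has a $\Gamma_{\times k,t}$-set $S$ such that every vertex of $S$ has an external $k$-open private neighbor with respect to $S$. The Cartesian product $G\,\Box\,H$ has vertex set $V(G)\times V(H)$, with $(g_1,h_1)\sim(g_2,h_2)$ iff either $g_1=g_2$ and $h_1h_2\in E(H)$, or $h_1=h_2$ and $g_1g_2\in E(G)$. *)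

(* Finite simple graphs: symmetric irreflexive relation on a finType. *)
From mathcomp Require Import all_boot.
Set Implicit Arguments. Unset Strict Implicit. Unset Printing Implicit Defensive.

Section Defs.
Variable T : finType.
Variable e : rel T.

Definition nbhd (x : T) : {set T} := [set y | e x y].

Definition mindeg_ge (k : nat) : Prop := forall x : T, k <= #|nbhd x|.

Definition is_kTDS (k : nat) (S : {set T}) : bool :=
  [forall x, k <= #|nbhd x :&: S|].

Definition minimal_kTDS (k : nat) (S : {set T}) : bool :=
  minset (fun A : {set T} => is_kTDS k A) S.

Definition upper_kTDN (k : nat) : nat :=
  \max_(S : {set T} | minimal_kTDS k S) #|S|.

Definition Gamma_set (k : nat) (S : {set T}) : Prop :=
  minimal_kTDS k S /\ #|S| = upper_kTDN k.

Definition ext_kopn (k : nat) (S : {set T}) (v v' : T) : Prop :=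
  e v' v /\ #|nbhd v' :&: S| = k /\ v' \notin S.

Definition Gamma_external (k : nat) : Prop :=
  exists S : {set T}, Gamma_set k S /\
    forall v, v \in S -> exists v', ext_kopn k S v v'.
End Defs.

Definition cartesian (T1 T2 : finType) (e1 : rel T1) (e2 : rel T2) : rel (T1 * T2) :=
  fun x y => ((x.1 == y.1) && e2 x.2 y.2) || ((x.2 == y.2) && e1 x.1 y.1).

From mathcomp Require Import all_boot.
Set Implicit Arguments. Unset Strict Implicit. Unset Printing Implicit Defensive.

(* If S is a Gamma-set of G in which every vertex s has an external k-open
   private neighbour v, then S x V(H) is a minimal kTDS of G [] H: it dominates
   because each layer G x {h} is a copy of G, and no (s, h) can be dropped since
   (v, h) sees exactly k vertices of S x V(H), all inside its own layer, one of
   them being (s, h).  Hence Gamma(G [] H) >= Gamma(G) |V(H)| >= Gamma(G) Gamma(H). *)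

Lemma upper_kTDN_le_card (T : finType) (e : rel T) k : upper_kTDN e k <= #|T|.
Proof. by apply/bigmax_leqP => S _; apply: max_card. Qed.

Section CartesianLayer.
Variables (T1 T2 : finType) (e1 : rel T1) (e2 : rel T2).
Local Notation eG := (cartesian e1 e2).

Lemma card_layer (A : {set T1}) (h : T2) : #|[set (a, h) | a in A]| = #|A|.
Proof. by apply: card_imset => a b []. Qed.

Lemma layer_sub_nbhd_cartesian (A : {set T1}) g h :
  [set (a, h) | a in nbhd e1 g :&: A] \subset nbhd eG (g, h) :&: setX A [set: T2].
Proof.
apply/subsetP => x /imsetP [a]; rewrite !inE => /andP [ga aA] ->.
by rewrite /cartesian /= eqxx ga aA orbT.
Qed.

Lemma nbhd_cartesian_setXT (S : {set T1}) v h : v \notin S ->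
  nbhd eG (v, h) :&: setX S [set: T2] = [set (a, h) | a in nbhd e1 v :&: S].
Proof.
move=> vNS; apply/eqP; rewrite eqEsubset layer_sub_nbhd_cartesian andbT.
apply/subsetP => [[a b]]; rewrite !inE /cartesian /=.
case/andP => /orP [/andP [/eqP <- _] | /andP [/eqP <- va]] /andP [aS _].
  by rewrite aS in vNS.
by apply/imsetP; exists a; rewrite // !inE va aS.
Qed.

Lemma kTDS_cartesian_setXT k (S : {set T1}) :
  is_kTDS e1 k S -> is_kTDS eG k (setX S [set: T2]).
Proof.
move=> /forallP SkT; apply/forallP => [[g h]].
apply: leq_trans (SkT g) _.
by rewrite -(card_layer _ h) subset_leq_card // layer_sub_nbhd_cartesian.
Qed.

Lemma minimal_kTDS_cartesian_setXT k (S : {set T1}) :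
  is_kTDS e1 k S -> (forall s, s \in S -> exists v, ext_kopn e1 k S s v) ->
  minimal_kTDS eG k (setX S [set: T2]).
Proof.
move=> SkT Spriv; apply/minsetP; split=> [|B BkT BX].
  exact: kTDS_cartesian_setXT.
apply/eqP; rewrite eqEsubset BX /=; apply/subsetP => [[s h]] sX.
apply/negPn/negP => sNB.
have sS : s \in S by move: sX; rewrite !inE andbT.
have [v [vs [vk vNS]]] := Spriv s sS.
have Bproper : nbhd eG (v, h) :&: B \proper nbhd eG (v, h) :&: setX S [set: T2].
  apply/properP; split; first exact: setIS.
  exists (s, h); last by rewrite inE (negbTE sNB) andbF.
  by rewrite !inE /cartesian /= eqxx vs sS orbT.
have := forallP BkT (v, h); apply/negP; rewrite -ltnNge.
by rewrite (leq_trans (proper_card Bproper)) // nbhd_cartesian_setXT // card_layer vk.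
Qed.

End CartesianLayer.

Theorem mainTheorem11 (k : nat) (hk : 2 <= k)
  (T1 : finType) (e1 : rel T1) (e1sym : symmetric e1) (e1irr : irreflexive e1)
  (hG : mindeg_ge e1 k) (hext : Gamma_external e1 k)
  (T2 : finType) (e2 : rel T2) (e2sym : symmetric e2) (e2irr : irreflexive e2)
  (hH : mindeg_ge e2 k) :
  upper_kTDN e1 k * upper_kTDN e2 k <= upper_kTDN (cartesian e1 e2) k.
Proof.
have [S [[Smin <-] Spriv]] := hext.
have SkT : is_kTDS e1 k S by case/minsetP: Smin.
have Xmin := minimal_kTDS_cartesian_setXT e2 SkT Spriv.
apply: (@leq_trans (#|S| * #|T2|)); first by rewrite leq_mul2l upper_kTDN_le_card orbT.
rewrite -cardsT -cardsX.
exact: (leq_bigmax_cond (F := fun A : {set _} => #|A|)) Xmin.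
Qed.
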